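(* Let $b_1,b_2,b_3\in\mathbb{Z}$ satisfy $b_2>b_3>0>b_1$ and $b_1+b_2+b_3=0$. Define $a_1,a_2,a_3$ by \[ a_1={\textstyle\frac{1}{\sqrt{3}}}(b_3-b_2),\quad a_2={\textstyle\frac{1}{\sqrt{3}}}(b_1-b_3),\quad a_3={\textstyle\frac{1}{\sqrt{3}}}(b_2-b_1), \] and define $a>0$ and $b\in(0,1)$ by \[ a^2=a_2(a_1-a_3) \quad\text{and}\quad b^2={a_1(a_2-a_3)\over a_2(a_1-a_3)}. \] Define a subset $N$ of $\mathbb{C}^3$ by \begin{align*} N=\Bigl\{ \bigl(&r{\rm e}^{ib_1s} \bigl({\textstyle{a_3-a_1\over a_3}}\bigr)^{1/2}\operatorname{dn}(at,b),\; r{\rm e}^{ib_2s} \bigl({\textstyle{a_3-a_2\over a_3}}\bigr)^{1/2}\operatorname{cn}(at,b),\\ &r{\rm e}^{ib_3s} \bigl({\textstyle{a_2-a_3\over a_2}}\bigr)^{1/2}\operatorname{sn}(at,b) \bigr):r>0,\quad s,t\in\mathbb{R}\Bigr\}. \end{align*} Then $N$ is a special Lagrangian cone on $T^2$ in $\mathbb{C}^3$ with phase $i$. Furthermore, $(s,t)$ are conformal coordinates on $N\cap\mathcal{S}^5$.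
   Context: $\mathbb{C}^3$ carries the Euclidean metric $g$, Kähler form $\omega=\frac{i}{2}\sum_j dz_j\wedge d\bar z_j$ and holomorphic volume form $\Omega=dz_1\wedge dz_2\wedge dz_3$; an oriented real 3-dimensional submanifold is special Lagrangian with phase ${\rm e}^{i\theta}$ if it is calibrated by $\cos\theta\,\mathrm{Re}\,\Omega+\sin\theta\,\mathrm{Im}\,\Omega$. $\mathcal{S}^5$ denotes the unit sphere in $\mathbb{C}^3$. $\operatorname{sn}(t,k),\operatorname{cn}(t,k),\operatorname{dn}(t,k)$ are the Jacobi elliptic functions with modulus $k$, which for $k\in[0,1)$ are periodic in $t$. *)

From Stdlib Require Import Reals ZArith ClassicalEpsilon.
From Coquelicot Require Import Coquelicot.
Open Scope R_scope.

Definition ellF (k phi : R) : R :=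
  RInt (fun th => / sqrt (1 - k ^ 2 * sin th ^ 2)) 0 phi.
Definition jam (u k : R) : R :=
  epsilon (inhabits 0) (fun phi => ellF k phi = u).
Definition jsn (u k : R) : R := sin (jam u k).
Definition jcn (u k : R) : R := cos (jam u k).
Definition jdn (u k : R) : R := sqrt (1 - k ^ 2 * jsn u k ^ 2).

Definition C3 : Type := (C * C * C)%type.

Definition c3scal (l : R) (p : C3) : C3 :=
  let '(z1, z2, z3) := p in (RtoC l * z1, RtoC l * z2, RtoC l * z3)%C.
Definition c3add (p q : C3) : C3 :=
  let '(z1, z2, z3) := p in let '(w1, w2, w3) := q in
  (z1 + w1, z2 + w2, z3 + w3)%C.
Definition c3zero : C3 := (RtoC 0, RtoC 0, RtoC 0).

Definition g3 (p q : C3) : R :=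
  let '(z1, z2, z3) := p in let '(w1, w2, w3) := q in
  Re (Cconj z1 * w1) + Re (Cconj z2 * w2) + Re (Cconj z3 * w3).
Definition norm3 (p : C3) : R := sqrt (g3 p p).
Definition S5 (p : C3) : Prop := norm3 p = 1.

(* holomorphic volume form Omega = dz1 ^ dz2 ^ dz3 evaluated on (u,v,w):
   the complex determinant of the matrix with columns u, v, w *)
Definition Omega3 (u v w : C3) : C :=
  let '(u1, u2, u3) := u in let '(v1, v2, v3) := v in let '(w1, w2, w3) := w in
  (u1 * (v2 * w3 - v3 * w2) - v1 * (u2 * w3 - u3 * w2)
   + w1 * (u2 * v3 - u3 * v2))%C.

(* 3x3 real determinant and Gram determinant; sqrt (gram3 u v w) is the
   Riemannian volume of the parallelepiped spanned by u, v, w *)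
Definition det3 (a11 a12 a13 a21 a22 a23 a31 a32 a33 : R) : R :=
  a11 * (a22 * a33 - a23 * a32) - a12 * (a21 * a33 - a23 * a31)
  + a13 * (a21 * a32 - a22 * a31).
Definition gram3 (u v w : C3) : R :=
  det3 (g3 u u) (g3 u v) (g3 u w) (g3 v u) (g3 v v) (g3 v w)
       (g3 w u) (g3 w v) (g3 w w).

Definition expi (x : R) : C := (cos x, sin x).

Definition a1 (b1 b2 b3 : Z) : R := / sqrt 3 * (IZR b3 - IZR b2).
Definition a2 (b1 b2 b3 : Z) : R := / sqrt 3 * (IZR b1 - IZR b3).
Definition a3 (b1 b2 b3 : Z) : R := / sqrt 3 * (IZR b2 - IZR b1).
Definition aa (b1 b2 b3 : Z) : R :=
  sqrt (a2 b1 b2 b3 * (a1 b1 b2 b3 - a3 b1 b2 b3)).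
Definition bb (b1 b2 b3 : Z) : R :=
  sqrt (a1 b1 b2 b3 * (a2 b1 b2 b3 - a3 b1 b2 b3)
        / (a2 b1 b2 b3 * (a1 b1 b2 b3 - a3 b1 b2 b3))).

Definition PhiN (b1 b2 b3 : Z) (r s t : R) : C3 :=
  let A1 := a1 b1 b2 b3 in let A2 := a2 b1 b2 b3 in let A3 := a3 b1 b2 b3 in
  let a := aa b1 b2 b3 in let b := bb b1 b2 b3 in
  (RtoC (r * sqrt ((A3 - A1) / A3) * jdn (a * t) b) * expi (IZR b1 * s),
   RtoC (r * sqrt ((A3 - A2) / A3) * jcn (a * t) b) * expi (IZR b2 * s),
   RtoC (r * sqrt ((A2 - A3) / A2) * jsn (a * t) b) * expi (IZR b3 * s))%C.

Definition Nset (b1 b2 b3 : Z) (p : C3) : Prop :=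
  exists r s t, 0 < r /\ p = PhiN b1 b2 b3 r s t.

(** * Geometric notions, for a set N given with a parametrization
      Phi : (0,oo) x R x R -> C^3, N = { Phi r s t | r > 0 } *)

Definition C1_immersion (Phi : R -> R -> R -> C3) : Prop :=
  exists Xr Xs Xt : R -> R -> R -> C3,
    forall r s t, 0 < r ->
      is_derive (fun x => Phi x s t) r (Xr r s t) /\
      is_derive (fun x => Phi r x t) s (Xs r s t) /\
      is_derive (fun x => Phi r s x) t (Xt r s t) /\
      continuous (fun p : R * R * R => Xr (fst (fst p)) (snd (fst p)) (snd p)) (r, s, t) /\
      continuous (fun p : R * R * R => Xs (fst (fst p)) (snd (fst p)) (snd p)) (r, s, t) /\
      continuous (fun p : R * R * R => Xt (fst (fst p)) (snd (fst p)) (snd p)) (r, s, t) /\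
      (forall al be ga : R,
         c3add (c3add (c3scal al (Xr r s t)) (c3scal be (Xs r s t)))
               (c3scal ga (Xt r s t)) = c3zero ->
         al = 0 /\ be = 0 /\ ga = 0).

Definition is_cone (N : C3 -> Prop) : Prop :=
  forall p l, N p -> 0 < l -> N (c3scal l p).

(* the image is a cone on T^2: Phi is injective modulo a rank-2 lattice of
   the (s,t)-plane (which is left invariant), so that the link is the
   embedded image of the torus R^2 / Lambda *)
Definition cone_on_T2_param (Phi : R -> R -> R -> C3) : Prop :=
  exists u1 u2 v1 v2 : R, u1 * v2 - u2 * v1 <> 0 /\
    forall r s t r' s' t', 0 < r -> 0 < r' ->
      (Phi r s t = Phi r' s' t' <->
       r = r' /\ exists m n : Z,
         s' - s = IZR m * u1 + IZR n * v1 /\ t' - t = IZR m * u2 + IZR n * v2).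

(* special Lagrangian with phase e^{i theta}: calibrated by
   cos theta Re Omega + sin theta Im Omega, for one of the two orientations
   of the (connected) parametrized 3-fold *)
Definition calibrated_SL (theta : R) (Phi : R -> R -> R -> C3) : Prop :=
  exists eps : R, (eps = 1 \/ eps = -1) /\
  forall r s t Xr Xs Xt, 0 < r ->
    is_derive (fun x => Phi x s t) r Xr ->
    is_derive (fun x => Phi r x t) s Xs ->
    is_derive (fun x => Phi r s x) t Xt ->
    eps * (cos theta * Re (Omega3 Xr Xs Xt) + sin theta * Im (Omega3 Xr Xs Xt))
      = sqrt (gram3 Xr Xs Xt).

(* (s,t) are conformal coordinates on N cap S^5: the chart
   (s,t) |-> Phi 1 s t / |Phi 1 s t| of N cap S^5 (radial projection) *)
Definition link_chart (Phi : R -> R -> R -> C3) (s t : R) : C3 :=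
  c3scal (/ norm3 (Phi 1 s t)) (Phi 1 s t).

Definition conformal_coords (psi : R -> R -> C3) : Prop :=
  forall s t, exists Ys Yt,
    is_derive (fun x => psi x t) s Ys /\
    is_derive (fun x => psi s x) t Yt /\
    g3 Ys Yt = 0 /\ g3 Ys Ys = g3 Yt Yt /\ 0 < g3 Ys Ys.

(* N is the cone r (x1(t) e^{i b1 s}, x2(t) e^{i b2 s}, x3(t) e^{i b3 s}) over the profile
   x = (C1 dn, C2 cn, C3 sn)(a t).  For such a cone with b1 + b2 + b3 = 0, if x . (b x) = 0
   and x' = lam (x cross b x) with lam > 0, the frame (d/dr, d/ds, d/dt) is orthogonal and
   Omega(d/dr, d/ds, d/dt) = i r^2 lam |x|^2 |b x|^2, which is exactly the volume of the frame:
   the cone is special Lagrangian with phase i.  The Jacobi profile solves this system with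
   lam = 1/sqrt 3 and |x|^2 = 3, and then |d/ds| = |d/dt| on the link.
   Two parameters give the same point iff t' - t is a multiple n of the half period
   ellF(b, PI)/a, e^{i b1 (s'-s)} = 1 and e^{i b2 (s'-s)} = (-1)^n; these pairs form a rank-2
   lattice, computed from gcd(b1, b2) and a Bezout relation. *)

From Stdlib Require Import Reals Ranalysis5 ZArith ClassicalEpsilon FunctionalExtensionality.
From Stdlib Require Import Lra Lia Psatz.
From Coquelicot Require Import Coquelicot.
Open Scope R_scope.

Notation C_NM := (prod_NormedModule R_AbsRing R_NormedModule R_NormedModule).
Notation C3_NM := (prod_NormedModule R_AbsRing (prod_NormedModule R_AbsRing C_NM C_NM) C_NM).

Lemma is_derive_comp_R (f g : R -> R) x df dg :
  is_derive f (g x) df -> is_derive g x dg -> is_derive (fun y => f (g y)) x (df * dg).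
Proof.
  intros Hf Hg.
  replace (df * dg) with (scal dg df) by (unfold scal; simpl; unfold mult; simpl; ring).
  apply (is_derive_comp (K := R_AbsRing) (V := R_NormedModule)); assumption.
Qed.

Lemma is_derive_pair {U V : NormedModule R_AbsRing} (f : R -> U) (g : R -> V) x lf lg :
  is_derive f x lf -> is_derive g x lg ->
  is_derive (V := prod_NormedModule R_AbsRing U V) (fun y => (f y, g y)) x (lf, lg).
Proof.
  intros Hf Hg.
  apply (filterdiff_comp'_2 f g pair x _ _ pair Hf Hg).
  apply (filterdiff_ext_lin _ (fun p : prod_NormedModule R_AbsRing U V => p)).
  - apply (filterdiff_ext (fun p : prod_NormedModule R_AbsRing U V => p)).
    + intros [a b]; reflexivity.
    + apply filterdiff_id.
  - intros [a b]; reflexivity.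
Qed.

Lemma is_derive_fst {U V : NormedModule R_AbsRing} (f : R -> U * V) x l :
  is_derive (V := prod_NormedModule R_AbsRing U V) f x l ->
  is_derive (fun y => fst (f y)) x (fst l).
Proof. intros H. apply (filterdiff_comp' f fst x _ fst H (filterdiff_linear _ is_linear_fst)). Qed.

Lemma is_derive_snd {U V : NormedModule R_AbsRing} (f : R -> U * V) x l :
  is_derive (V := prod_NormedModule R_AbsRing U V) f x l ->
  is_derive (fun y => snd (f y)) x (snd l).
Proof. intros H. apply (filterdiff_comp' f snd x _ snd H (filterdiff_linear _ is_linear_snd)). Qed.

Definition derive_unique (V : NormedModule R_AbsRing) : Prop :=
  forall (f : R -> V) x l l', is_derive f x l -> is_derive f x l' -> l = l'.

Lemma derive_unique_R : derive_unique R_NormedModule.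
Proof. intros f x l l' H H'. apply is_derive_unique in H, H'. congruence. Qed.

Lemma derive_unique_prod (U V : NormedModule R_AbsRing) :
  derive_unique U -> derive_unique V -> derive_unique (prod_NormedModule R_AbsRing U V).
Proof.
  intros HU HV f x [l1 l2] [l1' l2'] H H'. f_equal.
  - exact (HU _ x _ _ (is_derive_fst f x _ H) (is_derive_fst f x _ H')).
  - exact (HV _ x _ _ (is_derive_snd f x _ H) (is_derive_snd f x _ H')).
Qed.

Lemma derive_unique_C3 : derive_unique C3_NM.
Proof. repeat apply derive_unique_prod; apply derive_unique_R. Qed.

Lemma continuous_pair {T U V : UniformSpace} (f : T -> U) (g : T -> V) x :
  continuous f x -> continuous g x -> continuous (fun y => (f y, g y)) x.
Proof.
  intros Hf Hg. apply (continuous_comp_2 f g pair x Hf Hg).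
  apply (continuous_ext (fun p => p)); [intros [a b]; reflexivity | apply continuous_id].
Qed.

Lemma continuous_Rmult {T : UniformSpace} (f g : T -> R) x :
  continuous f x -> continuous g x -> continuous (fun y => f y * g y) x.
Proof. apply (continuous_mult (K := R_AbsRing)). Qed.

Lemma continuous_cos x : continuous cos x.
Proof.
  apply (ex_derive_continuous (K := R_AbsRing) (V := R_NormedModule)). auto_derive; auto.
Qed.

Lemma continuous_sin x : continuous sin x.
Proof.
  apply (ex_derive_continuous (K := R_AbsRing) (V := R_NormedModule)). auto_derive; auto.
Qed.

Section Jacobi.

Variable k : R.
Hypothesis Hk : k ^ 2 < 1.

Definition ellF_integrand (th : R) : R := / sqrt (1 - k ^ 2 * sin th ^ 2).

Lemma dn_radicand_pos th : 0 < 1 - k ^ 2 * sin th ^ 2.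
Proof.
  pose proof (sin2_cos2 th); unfold Rsqr in *.
  pose proof (pow2_ge_0 k); pose proof (pow2_ge_0 (cos th)); nra.
Qed.

Lemma ellF_integrand_ge1 th : 1 <= ellF_integrand th.
Proof.
  unfold ellF_integrand. pose proof (dn_radicand_pos th) as Hpos.
  assert (Hle : sqrt (1 - k ^ 2 * sin th ^ 2) <= 1).
  { rewrite <- sqrt_1 at 2. apply sqrt_le_1_alt.
    pose proof (pow2_ge_0 k); pose proof (pow2_ge_0 (sin th)); nra. }
  rewrite <- Rinv_1 at 1. apply Rinv_le_contravar; [apply sqrt_lt_R0|]; lra.
Qed.

Lemma continuous_ellF_integrand th : continuous ellF_integrand th.
Proof.
  apply (ex_derive_continuous (K := R_AbsRing) (V := R_NormedModule)). unfold ellF_integrand.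
  pose proof (dn_radicand_pos th).
  auto_derive. repeat split; try lra. apply Rgt_not_eq, sqrt_lt_R0; lra.
Qed.

Lemma ex_RInt_ellF_integrand a b : ex_RInt ellF_integrand a b.
Proof.
  apply (ex_RInt_continuous (V := R_CompleteNormedModule)); intros; apply continuous_ellF_integrand.
Qed.

Lemma is_derive_ellF phi : is_derive (ellF k) phi (ellF_integrand phi).
Proof.
  apply (is_derive_RInt _ _ 0).
  - apply filter_forall; intros.
    apply (RInt_correct (V := R_CompleteNormedModule)), ex_RInt_ellF_integrand.
  - apply continuous_ellF_integrand.
Qed.

Lemma ellF_sub x y : ellF k y - ellF k x = RInt ellF_integrand x y.
Proof.
  unfold ellF; fold ellF_integrand.
  rewrite <- (RInt_Chasles ellF_integrand 0 x y) by apply ex_RInt_ellF_integrand.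
  unfold plus; simpl; ring.
Qed.

Lemma ellF_sub_ge x y : x <= y -> y - x <= ellF k y - ellF k x.
Proof.
  intros Hxy. rewrite ellF_sub.
  replace (y - x) with (RInt (fun _ => 1) x y)
    by (rewrite RInt_const; unfold scal; simpl; unfold mult; simpl; ring).
  apply RInt_le; auto using ex_RInt_const, ex_RInt_ellF_integrand.
  intros; apply ellF_integrand_ge1.
Qed.

Lemma ellF_0 : ellF k 0 = 0.
Proof. apply (RInt_point (V := R_CompleteNormedModule)). Qed.

Lemma ellF_PI_pos : 0 < ellF k PI.
Proof.
  pose proof PI_RGT_0. pose proof (ellF_sub_ge 0 PI ltac:(lra)) as Hge.
  rewrite ellF_0 in Hge; lra.
Qed.

Lemma ellF_add_PI phi : ellF k (phi + PI) = ellF k phi + ellF k PI.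
Proof.
  assert (Hshift : RInt ellF_integrand PI (phi + PI) = ellF k phi).
  { pose proof (RInt_comp_lin (V := R_CompleteNormedModule) ellF_integrand 1 PI 0 phi) as Hlin.
    replace (1 * 0 + PI) with PI in Hlin by ring.
    replace (1 * phi + PI) with (phi + PI) in Hlin by ring.
    rewrite <- Hlin by apply ex_RInt_ellF_integrand.
    apply RInt_ext; intros th _. unfold scal; simpl; unfold mult; simpl.
    unfold ellF_integrand. rewrite Rmult_1_l, Rmult_1_l, neg_sin. f_equal; f_equal; ring. }
  pose proof (ellF_sub PI (phi + PI)). lra.
Qed.

Lemma ellF_add_IZR_PI n phi : ellF k (phi + IZR n * PI) = ellF k phi + IZR n * ellF k PI.
Proof.
  revert phi; induction n as [|n IH|n IH] using Z.peano_ind; intros phi.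
  - rewrite !Rmult_0_l, Rplus_0_r; ring.
  - rewrite succ_IZR.
    replace (phi + (IZR n + 1) * PI) with (phi + IZR n * PI + PI) by ring.
    rewrite ellF_add_PI, IH; ring.
  - rewrite <- Z.sub_1_r, minus_IZR.
    pose proof (ellF_add_PI (phi + (IZR n - 1) * PI)) as Hn.
    replace (phi + (IZR n - 1) * PI + PI) with (phi + IZR n * PI) in Hn by ring.
    rewrite IH in Hn; lra.
Qed.

Lemma ellF_inj x y : ellF k x = ellF k y -> x = y.
Proof.
  intros Heq. destruct (Rle_dec x y).
  - pose proof (ellF_sub_ge x y r); lra.
  - pose proof (ellF_sub_ge y x ltac:(lra)); lra.
Qed.

Lemma ellF_surj u : exists phi, ellF k phi = u.
Proof.
  pose proof (Rabs_pos u) as Habs.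
  assert (Hup : Rabs u <= ellF k (Rabs u))
    by (pose proof (ellF_sub_ge 0 (Rabs u) Habs); rewrite ellF_0 in *; lra).
  assert (Hlo : ellF k (- Rabs u) <= - Rabs u)
    by (pose proof (ellF_sub_ge (- Rabs u) 0 ltac:(lra)); rewrite ellF_0 in *; lra).
  assert (Hcont : continuity (ellF k)).
  { intros x. apply continuity_pt_filterlim, (ex_derive_continuous (V := R_NormedModule)).
    eexists; apply is_derive_ellF. }
  destruct (IVT_gen (ellF k) (- Rabs u) (Rabs u) u Hcont) as [phi [_ Hphi]].
  - pose proof (Rle_abs u); pose proof (Rabs_maj2 u).
    split; [apply Rle_trans with (ellF k (- Rabs u)); [apply Rmin_l|]
           |apply Rle_trans with (ellF k (Rabs u)); [|apply Rmax_r]]; lra.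
  - exists phi; exact Hphi.
Qed.

Lemma ellF_jam u : ellF k (jam u k) = u.
Proof. apply (epsilon_spec (inhabits 0) (fun phi => ellF k phi = u)), ellF_surj. Qed.

Lemma jam_eq_iff u phi : jam u k = phi <-> ellF k phi = u.
Proof. split; [intros <-; apply ellF_jam | intros <-; apply ellF_inj, ellF_jam]. Qed.

Lemma jam_add_iff u v n : jam v k = jam u k + IZR n * PI <-> v = u + IZR n * ellF k PI.
Proof. rewrite jam_eq_iff, ellF_add_IZR_PI, ellF_jam. split; auto. Qed.

Lemma jam_le u v : u <= v -> jam u k <= jam v k.
Proof.
  intros Huv. destruct (Rle_dec (jam u k) (jam v k)) as [|Hlt]; auto.
  pose proof (ellF_sub_ge (jam v k) (jam u k) ltac:(lra)) as Hge. rewrite !ellF_jam in Hge.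
  assert (u = v) by lra; subst; lra.
Qed.

Lemma jam_lipschitz u v : Rabs (jam v k - jam u k) <= Rabs (v - u).
Proof.
  destruct (Rle_dec u v) as [Huv | Hvu].
  - pose proof (jam_le u v Huv) as Hle.
    pose proof (ellF_sub_ge (jam u k) (jam v k) Hle) as Hge. rewrite !ellF_jam in Hge.
    rewrite !Rabs_right; lra.
  - pose proof (jam_le v u ltac:(lra)) as Hle.
    pose proof (ellF_sub_ge (jam v k) (jam u k) Hle) as Hge. rewrite !ellF_jam in Hge.
    rewrite !Rabs_left1; lra.
Qed.

(* Inverse function rule: [jam] inverts [ellF], whose derivative is [1 / jdn]. *)
Lemma is_derive_jam u : is_derive (fun v => jam v k) u (jdn u k).
Proof.
  assert (Hlim : forall a, derivable_pt_lim (ellF k) a (ellF_integrand a))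
    by (intros a; apply is_derive_Reals, is_derive_ellF).
  pose (Hder := fun a => exist _ (ellF_integrand a) (Hlim a) : derivable_pt (ellF k) a).
  assert (Hcont : continuity_pt (fun v => jam v k) u).
  { intros eps Heps. exists eps. split; auto. intros v [_ Hv].
    simpl in *; unfold R_dist in *. pose proof (jam_lipschitz u v); lra. }
  assert (Hmono : jam (u - 1) k <= jam u k <= jam (u + 1) k)
    by (split; apply jam_le; lra).
  apply is_derive_Reals.
  replace (jdn u k) with (1 / derive_pt (ellF k) (jam u k) (Hder (jam u k))).
  - apply (derivable_pt_lim_recip_interv (ellF k) (fun v => jam v k) (u - 1) (u + 1) u
             (fun a _ => Hder a) Hcont); try lra; auto.
    + intros; apply ellF_jam.
    + rewrite (derive_pt_eq_0 _ _ _ _ (Hlim _)).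
      pose proof (ellF_integrand_ge1 (jam u k)); lra.
  - rewrite (derive_pt_eq_0 _ _ _ _ (Hlim _)).
    unfold jdn, jsn, ellF_integrand. field.
    apply Rgt_not_eq, sqrt_lt_R0, dn_radicand_pos.
Qed.

Lemma jsn2_jcn2 u : jsn u k ^ 2 + jcn u k ^ 2 = 1.
Proof. unfold jsn, jcn. pose proof (sin2_cos2 (jam u k)). unfold Rsqr in *. lra. Qed.

Lemma jdn_pos u : 0 < jdn u k.
Proof. apply sqrt_lt_R0, dn_radicand_pos. Qed.

Lemma jdn2 u : jdn u k ^ 2 = 1 - k ^ 2 * jsn u k ^ 2.
Proof. apply pow2_sqrt, Rlt_le, dn_radicand_pos. Qed.

Lemma is_derive_jsn u : is_derive (fun v => jsn v k) u (jcn u k * jdn u k).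
Proof. apply is_derive_comp_R, is_derive_jam. apply is_derive_Reals, derivable_pt_lim_sin. Qed.

Lemma is_derive_jcn u : is_derive (fun v => jcn v k) u (- (jsn u k * jdn u k)).
Proof.
  rewrite Ropp_mult_distr_l. apply is_derive_comp_R, is_derive_jam.
  apply is_derive_Reals, derivable_pt_lim_cos.
Qed.

Lemma is_derive_jdn u : is_derive (fun v => jdn v k) u (- (k ^ 2 * jsn u k * jcn u k)).
Proof.
  unfold jdn at 1.
  replace (- (k ^ 2 * jsn u k * jcn u k))
    with (/ (2 * sqrt (1 - k ^ 2 * jsn u k ^ 2))
          * - (k ^ 2 * (2 * jsn u k * (jcn u k * jdn u k))))
    by (pose proof (jdn_pos u); unfold jdn in *; field; lra).
  apply is_derive_comp_R.
  - apply is_derive_Reals, derivable_pt_lim_sqrt, dn_radicand_pos.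
  - pose proof (is_derive_jsn u) as Hsn.
    auto_derive; [eexists; exact Hsn|].
    replace (Derive (fun x : R => jsn x k) u) with (jcn u k * jdn u k)
      by (symmetry; apply is_derive_unique, Hsn).
    ring.
Qed.

End Jacobi.

Lemma sin_IZR_PI n : sin (IZR n * PI) = 0.
Proof. apply sin_eq_0_1; eauto. Qed.

Lemma cos_IZR_PI_sq n : cos (IZR n * PI) ^ 2 = 1.
Proof.
  pose proof (sin2_cos2 (IZR n * PI)) as H. rewrite sin_IZR_PI in H. unfold Rsqr in H. lra.
Qed.

Lemma cos_eq_1_iff th : cos th = 1 <-> exists m : Z, th = IZR (2 * m) * PI.
Proof.
  replace th with (2 * (th / 2)) at 1 by field. rewrite cos_2a_sin. split.
  - intros Hc. destruct (sin_eq_0_0 (th / 2)) as [m Hm]; [nra|].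
    exists m. rewrite mult_IZR. lra.
  - intros [m ->]. rewrite mult_IZR.
    replace (2 * IZR m * PI / 2) with (IZR m * PI) by field. rewrite sin_IZR_PI; ring.
Qed.

Lemma cos_eq_1_sin th : cos th = 1 -> sin th = 0.
Proof. intros Hc. pose proof (sin2_cos2 th) as H. rewrite Hc in H. unfold Rsqr in H. nra. Qed.

Definition polar (rho th : R) : C := (rho * cos th, rho * sin th).
Definition ipolar (rho th : R) : C := (- (rho * sin th), rho * cos th).

Lemma RtoC_mul_expi rho th : (RtoC rho * expi th)%C = polar rho th.
Proof. unfold RtoC, expi, polar, Cmult; simpl. f_equal; ring. Qed.

Lemma RtoC_mul_polar l rho th : (RtoC l * polar rho th)%C = polar (l * rho) th.
Proof. unfold RtoC, polar, Cmult; simpl. f_equal; ring. Qed.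

Lemma polar_eq_iff rho rho' th th' :
  polar rho th = polar rho' th' <->
  rho' * cos (th' - th) = rho /\ rho' * sin (th' - th) = 0.
Proof.
  pose proof (sin2_cos2 th) as Hth; unfold Rsqr in Hth.
  unfold polar; split.
  - intros [= Hc Hs]. rewrite cos_minus, sin_minus. split.
    + transitivity (cos th * (rho' * cos th') + sin th * (rho' * sin th')); [ring|].
      rewrite <- Hc, <- Hs.
      transitivity (rho * (sin th * sin th + cos th * cos th)); [ring | rewrite Hth; ring].
    + transitivity (cos th * (rho' * sin th') - sin th * (rho' * cos th')); [ring|].
      rewrite <- Hc, <- Hs; ring.
  - intros [Hc Hs]. replace th' with (th + (th' - th)) by ring.
    rewrite cos_plus, sin_plus. f_equal.
    + transitivity (cos th * (rho' * cos (th' - th)) - sin th * (rho' * sin (th' - th)));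
        [rewrite Hc, Hs; ring | ring].
    + transitivity (sin th * (rho' * cos (th' - th)) + cos th * (rho' * sin (th' - th)));
        [rewrite Hc, Hs; ring | ring].
Qed.

Lemma polar_scaled_eq_iff c rho rho' th th' :
  c <> 0 ->
  (polar (c * rho) th = polar (c * rho') th' <->
   rho' * cos (th' - th) = rho /\ rho' * sin (th' - th) = 0).
Proof.
  intros Hc. rewrite polar_eq_iff. split.
  - intros [Hcos Hsin]. split; apply (Rmult_eq_reg_l c); auto.
    + rewrite <- Hcos; ring.
    + rewrite Rmult_0_r, <- Hsin; ring.
  - intros [Hcos Hsin]. rewrite Rmult_assoc, Hcos, Rmult_assoc, Hsin. split; ring.
Qed.

Lemma C3_eq_iff (p1 p2 p3 q1 q2 q3 : C) :
  ((p1, p2, p3) : C3) = (q1, q2, q3) <-> p1 = q1 /\ p2 = q2 /\ p3 = q3.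
Proof.
  split.
  - intros H. repeat split.
    + exact (f_equal (fun p : C3 => fst (fst p)) H).
    + exact (f_equal (fun p : C3 => snd (fst p)) H).
    + exact (f_equal (fun p : C3 => snd p) H).
  - intros (-> & -> & ->). reflexivity.
Qed.

Lemma polar_pos_eq_iff rho rho' th th' :
  0 < rho -> 0 < rho' ->
  (polar rho th = polar rho' th' <-> rho' = rho /\ cos (th' - th) = 1).
Proof.
  intros Hr Hr'. rewrite polar_eq_iff.
  pose proof (sin2_cos2 (th' - th)) as H; unfold Rsqr in H. split.
  - intros [Hc Hs].
    assert (Hs0 : sin (th' - th) = 0) by (apply (Rmult_eq_reg_l rho'); lra).
    assert (Hc1 : cos (th' - th) = 1) by (rewrite Hs0 in H; nra).
    rewrite Hc1 in Hc. split; lra.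
  - intros [-> Hc1]. rewrite (cos_eq_1_sin _ Hc1), Hc1. split; ring.
Qed.

Lemma half_turn_system phi n m :
  let phi' := phi + IZR n * PI in
  let th := IZR (n + 2 * m) * PI in
  cos phi' * cos th = cos phi /\ cos phi' * sin th = 0 /\
  sin phi' * cos th = sin phi /\ sin phi' * sin th = 0.
Proof.
  intros phi' th. unfold phi', th.
  pose proof (cos_IZR_PI_sq n) as Hsq.
  assert (Hc : cos (IZR (n + 2 * m) * PI) = cos (IZR n * PI)).
  { rewrite plus_IZR, Rmult_plus_distr_r, cos_plus, sin_IZR_PI.
    rewrite (proj2 (cos_eq_1_iff (IZR (2 * m) * PI))) by (exists m; reflexivity). ring. }
  rewrite Hc, sin_IZR_PI, cos_plus, sin_plus, sin_IZR_PI.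
  split; [|split; [|split]].
  - transitivity (cos phi * cos (IZR n * PI) ^ 2); [ring | rewrite Hsq; ring].
  - ring.
  - transitivity (sin phi * cos (IZR n * PI) ^ 2); [ring | rewrite Hsq; ring].
  - ring.
Qed.

Lemma half_turn_forward phi phi' th :
  (cos phi' * cos th = cos phi /\ cos phi' * sin th = 0 /\
   sin phi' * cos th = sin phi /\ sin phi' * sin th = 0) ->
  exists n m : Z, phi' = phi + IZR n * PI /\ th = IZR (n + 2 * m) * PI.
Proof.
  intros (Hc & Hcs & Hs & Hss).
  pose proof (sin2_cos2 phi') as H'; unfold Rsqr in H'.
  assert (Hsth : sin th = 0).
  { transitivity (sin phi' * (sin phi' * sin th) + cos phi' * (cos phi' * sin th)).
    - transitivity (sin th * (sin phi' * sin phi' + cos phi' * cos phi')); [rewrite H'|]; ring.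
    - rewrite Hss, Hcs; ring. }
  assert (Hsin : sin (phi' - phi) = 0) by (rewrite sin_minus, <- Hc, <- Hs; ring).
  destruct (sin_eq_0_0 _ Hsin) as [n Hn].
  assert (Hcos : cos th = cos (IZR n * PI)).
  { rewrite <- Hn, cos_minus, <- Hc, <- Hs.
    transitivity (cos th * (sin phi' * sin phi' + cos phi' * cos phi')); [rewrite H'|]; ring. }
  assert (Hcos1 : cos (th - IZR n * PI) = 1)
    by (rewrite cos_minus, Hsth, Hcos, <- (cos_IZR_PI_sq n); ring).
  destruct (proj1 (cos_eq_1_iff _) Hcos1) as [m Hm].
  exists n, m. split; [lra|]. rewrite plus_IZR, mult_IZR in *. lra.
Qed.

Lemma half_turn_iff phi phi' th :
  (cos phi' * cos th = cos phi /\ cos phi' * sin th = 0 /\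
   sin phi' * cos th = sin phi /\ sin phi' * sin th = 0) <->
  exists n m : Z, phi' = phi + IZR n * PI /\ th = IZR (n + 2 * m) * PI.
Proof.
  split; [apply half_turn_forward | intros (n & m & -> & ->); apply half_turn_system].
Qed.

Lemma g3_sym p q : g3 p q = g3 q p.
Proof.
  destruct p as [[[p1 p1'] [p2 p2']] [p3 p3']], q as [[[q1 q1'] [q2 q2']] [q3 q3']].
  unfold g3, Re, Cconj, Cmult; simpl; ring.
Qed.

Lemma g3_c3add p q w : g3 (c3add p q) w = g3 p w + g3 q w.
Proof.
  destruct p as [[[p1 p1'] [p2 p2']] [p3 p3']], q as [[[q1 q1'] [q2 q2']] [q3 q3']],
    w as [[[w1 w1'] [w2 w2']] [w3 w3']].
  unfold g3, c3add, Re, Cconj, Cmult, Cplus; simpl; ring.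
Qed.

Lemma g3_c3scal l p w : g3 (c3scal l p) w = l * g3 p w.
Proof.
  destruct p as [[[p1 p1'] [p2 p2']] [p3 p3']], w as [[[w1 w1'] [w2 w2']] [w3 w3']].
  unfold g3, c3scal, Re, Cconj, Cmult, RtoC; simpl; ring.
Qed.

Lemma g3_c3zero w : g3 c3zero w = 0.
Proof.
  destruct w as [[[w1 w1'] [w2 w2']] [w3 w3']].
  unfold g3, c3zero, Re, Cconj, Cmult, RtoC; simpl; ring.
Qed.

Section PolarFrame.

Variables th1 th2 th3 : R.

Lemma g3_polar_polar u1 u2 u3 v1 v2 v3 :
  g3 (polar u1 th1, polar u2 th2, polar u3 th3) (polar v1 th1, polar v2 th2, polar v3 th3)
  = u1 * v1 + u2 * v2 + u3 * v3.
Proof.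
  pose proof (sin2_cos2 th1) as E1; pose proof (sin2_cos2 th2) as E2.
  pose proof (sin2_cos2 th3) as E3. unfold Rsqr, g3, polar, Re, Cconj, Cmult in *; simpl.
  transitivity (u1 * v1 * (sin th1 * sin th1 + cos th1 * cos th1)
    + u2 * v2 * (sin th2 * sin th2 + cos th2 * cos th2)
    + u3 * v3 * (sin th3 * sin th3 + cos th3 * cos th3)); [ring|].
  rewrite E1, E2, E3; ring.
Qed.

Lemma g3_polar_ipolar u1 u2 u3 v1 v2 v3 :
  g3 (polar u1 th1, polar u2 th2, polar u3 th3)
     (ipolar v1 th1, ipolar v2 th2, ipolar v3 th3) = 0.
Proof. unfold g3, polar, ipolar, Re, Cconj, Cmult; simpl; ring. Qed.

Lemma g3_ipolar_ipolar u1 u2 u3 v1 v2 v3 :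
  g3 (ipolar u1 th1, ipolar u2 th2, ipolar u3 th3)
     (ipolar v1 th1, ipolar v2 th2, ipolar v3 th3) = u1 * v1 + u2 * v2 + u3 * v3.
Proof.
  pose proof (sin2_cos2 th1) as E1; pose proof (sin2_cos2 th2) as E2.
  pose proof (sin2_cos2 th3) as E3. unfold Rsqr, g3, ipolar, Re, Cconj, Cmult in *; simpl.
  transitivity (u1 * v1 * (sin th1 * sin th1 + cos th1 * cos th1)
    + u2 * v2 * (sin th2 * sin th2 + cos th2 * cos th2)
    + u3 * v3 * (sin th3 * sin th3 + cos th3 * cos th3)); [ring|].
  rewrite E1, E2, E3; ring.
Qed.

Lemma Omega3_polar u1 u2 u3 v1 v2 v3 w1 w2 w3 :
  Omega3 (polar u1 th1, polar u2 th2, polar u3 th3)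
         (ipolar v1 th1, ipolar v2 th2, ipolar v3 th3)
         (polar w1 th1, polar w2 th2, polar w3 th3)
  = ipolar (det3 u1 v1 w1 u2 v2 w2 u3 v3 w3) (th1 + th2 + th3).
Proof.
  unfold Omega3, polar, ipolar, det3, Cmult, Cminus, Cplus, Copp; simpl.
  repeat rewrite ?cos_plus, ?sin_plus. f_equal; ring.
Qed.

End PolarFrame.

Lemma is_derive_polar_modulus (rho : R -> R) th x drho :
  is_derive rho x drho -> is_derive (V := C_NM) (fun y => polar (rho y) th) x (polar drho th).
Proof.
  intros H. unfold polar. rewrite (Rmult_comm drho (cos th)), (Rmult_comm drho (sin th)).
  apply is_derive_pair.
  - apply (is_derive_ext (fun y => cos th * rho y));
      [intros; apply Rmult_comm | apply is_derive_scal, H].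
  - apply (is_derive_ext (fun y => sin th * rho y));
      [intros; apply Rmult_comm | apply is_derive_scal, H].
Qed.

Lemma is_derive_polar_angle rho B s :
  is_derive (V := C_NM) (fun y => polar rho (B * y)) s (ipolar (rho * B) (B * s)).
Proof. unfold polar, ipolar. apply is_derive_pair; auto_derive; auto; ring. Qed.

Lemma is_derive_C3 (f1 f2 f3 : R -> C) l1 l2 l3 x :
  is_derive (V := C_NM) f1 x l1 -> is_derive (V := C_NM) f2 x l2 ->
  is_derive (V := C_NM) f3 x l3 ->
  is_derive (V := C3_NM) (fun y => (f1 y, f2 y, f3 y) : C3) x ((l1, l2, l3) : C3).
Proof.
  intros. apply (is_derive_pair (U := prod_NormedModule R_AbsRing C_NM C_NM) (V := C_NM)); auto.
  apply (is_derive_pair (U := C_NM) (V := C_NM)); auto.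
Qed.

Lemma continuous_polar {T : UniformSpace} (F Th : T -> R) x :
  continuous F x -> continuous Th x -> continuous (fun y => polar (F y) (Th y)) x.
Proof.
  intros HF HTh. unfold polar.
  apply continuous_pair; apply continuous_Rmult; auto; apply (continuous_comp Th);
    auto using continuous_cos, continuous_sin.
Qed.

Lemma continuous_ipolar {T : UniformSpace} (F Th : T -> R) x :
  continuous F x -> continuous Th x -> continuous (fun y => ipolar (F y) (Th y)) x.
Proof.
  intros HF HTh. unfold ipolar. apply continuous_pair.
  - apply (continuous_opp (fun y => F y * sin (Th y))).
    apply continuous_Rmult; auto. apply (continuous_comp Th); auto using continuous_sin.
  - apply continuous_Rmult; auto. apply (continuous_comp Th); auto using continuous_cos.
Qed.

Section ConeOverProfile.

Variables B1 B2 B3 lam : R.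
Variables x1 x2 x3 : R -> R.

Definition cone_map (r s t : R) : C3 :=
  (polar (r * x1 t) (B1 * s), polar (r * x2 t) (B2 * s), polar (r * x3 t) (B3 * s)).

Definition cone_dr (r s t : R) : C3 :=
  (polar (x1 t) (B1 * s), polar (x2 t) (B2 * s), polar (x3 t) (B3 * s)).

Definition cone_ds (r s t : R) : C3 :=
  (ipolar (r * x1 t * B1) (B1 * s), ipolar (r * x2 t * B2) (B2 * s),
   ipolar (r * x3 t * B3) (B3 * s)).

Definition cone_dt (r s t : R) : C3 :=
  (polar (r * (lam * (B3 - B2) * x2 t * x3 t)) (B1 * s),
   polar (r * (lam * (B1 - B3) * x3 t * x1 t)) (B2 * s),
   polar (r * (lam * (B2 - B1) * x1 t * x2 t)) (B3 * s)).

Definition profile_sq (t : R) : R := x1 t ^ 2 + x2 t ^ 2 + x3 t ^ 2.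
Definition weighted_sq (t : R) : R := (B1 * x1 t) ^ 2 + (B2 * x2 t) ^ 2 + (B3 * x3 t) ^ 2.

Hypothesis HB : B1 + B2 + B3 = 0.
Hypothesis Hlag : forall t, B1 * x1 t ^ 2 + B2 * x2 t ^ 2 + B3 * x3 t ^ 2 = 0.
Hypothesis Hode1 : forall t, is_derive x1 t (lam * (B3 - B2) * x2 t * x3 t).
Hypothesis Hode2 : forall t, is_derive x2 t (lam * (B1 - B3) * x3 t * x1 t).
Hypothesis Hode3 : forall t, is_derive x3 t (lam * (B2 - B1) * x1 t * x2 t).
Hypothesis Hlam : 0 < lam.

Lemma c3scal_cone_map l r s t : c3scal l (cone_map r s t) = cone_map (l * r) s t.
Proof. unfold cone_map, c3scal. rewrite !RtoC_mul_polar. f_equal; [f_equal|]; f_equal; ring. Qed.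

Lemma g3_cone_map r s t : g3 (cone_map r s t) (cone_map r s t) = r ^ 2 * profile_sq t.
Proof. unfold cone_map, profile_sq. rewrite g3_polar_polar. ring. Qed.

Lemma is_derive_cone_map_r r s t :
  is_derive (V := C3_NM) (fun y => cone_map y s t) r (cone_dr r s t).
Proof.
  apply is_derive_C3; apply is_derive_polar_modulus; auto_derive; auto; ring.
Qed.

Lemma is_derive_cone_map_s r s t :
  is_derive (V := C3_NM) (fun y => cone_map r y t) s (cone_ds r s t).
Proof. apply is_derive_C3; apply is_derive_polar_angle. Qed.

Lemma is_derive_cone_map_t r s t :
  is_derive (V := C3_NM) (fun y => cone_map r s y) t (cone_dt r s t).
Proof. apply is_derive_C3; apply is_derive_polar_modulus, is_derive_scal; auto. Qed.

Lemma continuous_profile1 t : continuous x1 t.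
Proof. apply (ex_derive_continuous (V := R_NormedModule)). eexists; apply Hode1. Qed.

Lemma continuous_profile2 t : continuous x2 t.
Proof. apply (ex_derive_continuous (V := R_NormedModule)). eexists; apply Hode2. Qed.

Lemma continuous_profile3 t : continuous x3 t.
Proof. apply (ex_derive_continuous (V := R_NormedModule)). eexists; apply Hode3. Qed.

Lemma continuous_r r s t : continuous (fun q : R * R * R => fst (fst q)) (r, s, t).
Proof. apply (continuous_comp fst fst); apply continuous_fst. Qed.

Lemma continuous_s r s t : continuous (fun q : R * R * R => snd (fst q)) (r, s, t).
Proof. apply (continuous_comp fst snd); [apply continuous_fst | apply continuous_snd]. Qed.

Lemma continuous_t_comp (f : R -> R) r s t :
  continuous f t -> continuous (fun q : R * R * R => f (snd q)) (r, s, t).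
Proof. intros Hf. apply (continuous_comp snd f); [apply continuous_snd | exact Hf]. Qed.

Local Ltac solve_continuous :=
  repeat match goal with
  | |- continuous (fun _ => polar _ _) _ => apply continuous_polar
  | |- continuous (fun _ => ipolar _ _) _ => apply continuous_ipolar
  | |- continuous (fun _ => (_, _)) _ => apply continuous_pair
  | |- continuous (fun q => fst (fst q)) _ => apply continuous_r
  | |- continuous (fun q => snd (fst q)) _ => apply continuous_s
  | |- continuous (fun q => x1 (snd q)) _ => apply continuous_t_comp, continuous_profile1
  | |- continuous (fun q => x2 (snd q)) _ => apply continuous_t_comp, continuous_profile2
  | |- continuous (fun q => x3 (snd q)) _ => apply continuous_t_comp, continuous_profile3
  | |- continuous (fun _ => _ * _) _ => apply continuous_Rmult
  | |- continuous (fun _ => _) _ => apply continuous_const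
  end.

Lemma continuous_cone_dr p :
  continuous (fun q : R * R * R => cone_dr (fst (fst q)) (snd (fst q)) (snd q)) p.
Proof. destruct p as [[r s] t]. unfold cone_dr. solve_continuous. Qed.

Lemma continuous_cone_ds p :
  continuous (fun q : R * R * R => cone_ds (fst (fst q)) (snd (fst q)) (snd q)) p.
Proof. destruct p as [[r s] t]. unfold cone_ds. solve_continuous. Qed.

Lemma continuous_cone_dt p :
  continuous (fun q : R * R * R => cone_dt (fst (fst q)) (snd (fst q)) (snd q)) p.
Proof. destruct p as [[r s] t]. unfold cone_dt. solve_continuous. Qed.

Lemma g3_cone_dr_dr r s t : g3 (cone_dr r s t) (cone_dr r s t) = profile_sq t.
Proof. unfold cone_dr, profile_sq. rewrite g3_polar_polar. ring. Qed.

Lemma g3_cone_ds_ds r s t : g3 (cone_ds r s t) (cone_ds r s t) = r ^ 2 * weighted_sq t.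
Proof. unfold cone_ds, weighted_sq. rewrite g3_ipolar_ipolar. ring. Qed.

(* Lagrange's identity [|x cross Bx|^2 = |x|^2 |Bx|^2 - (x . Bx)^2], where [x . Bx = 0]. *)
Lemma g3_cone_dt_dt r s t :
  g3 (cone_dt r s t) (cone_dt r s t) = r ^ 2 * lam ^ 2 * profile_sq t * weighted_sq t.
Proof.
  unfold cone_dt, profile_sq, weighted_sq. rewrite g3_polar_polar.
  transitivity (r ^ 2 * lam ^ 2 * ((x1 t ^ 2 + x2 t ^ 2 + x3 t ^ 2)
    * ((B1 * x1 t) ^ 2 + (B2 * x2 t) ^ 2 + (B3 * x3 t) ^ 2)
    - (B1 * x1 t ^ 2 + B2 * x2 t ^ 2 + B3 * x3 t ^ 2) ^ 2)); [ring|].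
  rewrite Hlag; ring.
Qed.

Lemma g3_cone_dr_ds r s t : g3 (cone_dr r s t) (cone_ds r s t) = 0.
Proof. apply g3_polar_ipolar. Qed.

Lemma g3_cone_dr_dt r s t : g3 (cone_dr r s t) (cone_dt r s t) = 0.
Proof. unfold cone_dr, cone_dt. rewrite g3_polar_polar. ring. Qed.

Lemma g3_cone_ds_dt r s t : g3 (cone_ds r s t) (cone_dt r s t) = 0.
Proof. rewrite g3_sym. apply g3_polar_ipolar. Qed.

Lemma gram3_cone_frame r s t :
  gram3 (cone_dr r s t) (cone_ds r s t) (cone_dt r s t)
  = (r ^ 2 * lam * profile_sq t * weighted_sq t) ^ 2.
Proof.
  unfold gram3, det3.
  rewrite (g3_sym (cone_ds r s t) (cone_dr r s t)), (g3_sym (cone_dt r s t) (cone_dr r s t)),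
    (g3_sym (cone_dt r s t) (cone_ds r s t)).
  rewrite g3_cone_dr_dr, g3_cone_ds_ds, g3_cone_dt_dt, g3_cone_dr_ds, g3_cone_dr_dt,
    g3_cone_ds_dt.
  ring.
Qed.

Lemma Omega3_cone_frame r s t :
  Omega3 (cone_dr r s t) (cone_ds r s t) (cone_dt r s t)
  = (0, r ^ 2 * lam * profile_sq t * weighted_sq t).
Proof.
  unfold cone_dr, cone_ds, cone_dt. rewrite Omega3_polar.
  replace (B1 * s + B2 * s + B3 * s) with 0 by (rewrite <- (Rmult_0_l s), <- HB; ring).
  unfold ipolar, profile_sq, weighted_sq, det3. rewrite sin_0, cos_0. f_equal; [ring|].
  transitivity (r ^ 2 * lam * ((x1 t ^ 2 + x2 t ^ 2 + x3 t ^ 2)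
    * ((B1 * x1 t) ^ 2 + (B2 * x2 t) ^ 2 + (B3 * x3 t) ^ 2)
    - (B1 * x1 t ^ 2 + B2 * x2 t ^ 2 + B3 * x3 t ^ 2) ^ 2)); [ring|].
  rewrite Hlag; ring.
Qed.

Lemma calibrated_cone_map : calibrated_SL (PI / 2) cone_map.
Proof.
  exists 1. split; [now left|].
  intros r s t Xr Xs Xt Hr Hdr Hds Hdt.
  rewrite (derive_unique_C3 _ _ _ _ Hdr (is_derive_cone_map_r r s t)),
    (derive_unique_C3 _ _ _ _ Hds (is_derive_cone_map_s r s t)),
    (derive_unique_C3 _ _ _ _ Hdt (is_derive_cone_map_t r s t)).
  rewrite gram3_cone_frame, Omega3_cone_frame, cos_PI2, sin_PI2, sqrt_pow2; [simpl; ring|].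
  unfold profile_sq, weighted_sq.
  pose proof (pow2_ge_0 r). pose proof (pow2_ge_0 (x1 t)). pose proof (pow2_ge_0 (x2 t)).
  pose proof (pow2_ge_0 (x3 t)). pose proof (pow2_ge_0 (B1 * x1 t)).
  pose proof (pow2_ge_0 (B2 * x2 t)). pose proof (pow2_ge_0 (B3 * x3 t)).
  repeat apply Rmult_le_pos; lra.
Qed.

Lemma C1_immersion_cone_map :
  (forall t, 0 < profile_sq t) -> (forall t, 0 < weighted_sq t) -> C1_immersion cone_map.
Proof.
  intros Hx HBx. exists cone_dr, cone_ds, cone_dt. intros r s t Hr.
  do 6 (split; [solve [auto using is_derive_cone_map_r, is_derive_cone_map_s,
    is_derive_cone_map_t, continuous_cone_dr, continuous_cone_ds, continuous_cone_dt]|]).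
  intros al be ga Hcomb.
  assert (Hproj : forall Y, al * g3 (cone_dr r s t) Y + be * g3 (cone_ds r s t) Y
                            + ga * g3 (cone_dt r s t) Y = 0).
  { intros Y. rewrite <- !g3_c3scal, <- !g3_c3add, Hcomb. apply g3_c3zero. }
  pose proof (Hproj (cone_dr r s t)) as Hr'. pose proof (Hproj (cone_ds r s t)) as Hs'.
  pose proof (Hproj (cone_dt r s t)) as Ht'.
  rewrite (g3_sym (cone_ds r s t) (cone_dr r s t)), (g3_sym (cone_dt r s t) (cone_dr r s t)),
    (g3_sym (cone_dt r s t) (cone_ds r s t)) in *.
  rewrite g3_cone_dr_dr, g3_cone_ds_ds, g3_cone_dt_dt, g3_cone_dr_ds, g3_cone_dr_dt,
    g3_cone_ds_dt in *.
  pose proof (Hx t); pose proof (HBx t).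
  assert (0 < r ^ 2) by (apply pow_lt; auto). assert (0 < lam ^ 2) by (apply pow_lt; auto).
  assert (0 < r ^ 2 * weighted_sq t) by (apply Rmult_lt_0_compat; auto).
  assert (0 < r ^ 2 * lam ^ 2 * profile_sq t * weighted_sq t)
    by (repeat (apply Rmult_lt_0_compat; [|assumption]); assumption).
  repeat split; nra.
Qed.

Definition cone_image (p : C3) : Prop := exists r s t, 0 < r /\ p = cone_map r s t.

Lemma is_cone_cone_image : is_cone cone_image.
Proof.
  intros p l [r [s [t [Hr ->]]]] Hl. exists (l * r), s, t.
  split; [apply Rmult_lt_0_compat; auto | apply c3scal_cone_map].
Qed.

Section Link.

Variable c : R.
Hypothesis Hc : forall t, profile_sq t = c.
Hypothesis Hc_pos : 0 < c.

Lemma link_chart_cone_map s t : link_chart cone_map s t = cone_map (/ sqrt c) s t.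
Proof.
  unfold link_chart, norm3. rewrite g3_cone_map, Hc, c3scal_cone_map.
  replace (1 ^ 2 * c) with c by ring. f_equal; ring.
Qed.

Lemma S5_cone_map_iff r s t : 0 < r -> (S5 (cone_map r s t) <-> r = / sqrt c).
Proof.
  intros Hr. unfold S5, norm3. rewrite g3_cone_map, Hc.
  pose proof (sqrt_lt_R0 c Hc_pos). pose proof (sqrt_sqrt c (Rlt_le _ _ Hc_pos)).
  rewrite sqrt_mult_alt by apply pow2_ge_0. rewrite sqrt_pow2 by lra.
  split; intros Heq.
  - apply (Rmult_eq_reg_r (sqrt c)); [rewrite Heq, Rinv_l|]; lra.
  - rewrite Heq, Rinv_l; lra.
Qed.

Lemma link_chart_spec s t :
  S5 (link_chart cone_map s t) /\ cone_image (link_chart cone_map s t).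
Proof.
  pose proof (Rinv_0_lt_compat _ (sqrt_lt_R0 c Hc_pos)).
  rewrite link_chart_cone_map. split.
  - apply S5_cone_map_iff; auto.
  - exists (/ sqrt c), s, t; auto.
Qed.

Lemma cone_image_S5 p :
  cone_image p -> S5 p -> exists s t, p = link_chart cone_map s t.
Proof.
  intros [r [s [t [Hr ->]]]] HS. exists s, t.
  rewrite link_chart_cone_map. f_equal. apply (S5_cone_map_iff r s t Hr), HS.
Qed.

Lemma conformal_link_chart :
  lam ^ 2 * c = 1 -> (forall t, 0 < weighted_sq t) -> conformal_coords (link_chart cone_map).
Proof.
  intros Hlc HBx s t. exists (cone_ds (/ sqrt c) s t), (cone_dt (/ sqrt c) s t).
  split; [|split; [|split; [|split]]].
  - apply (is_derive_ext (fun y => cone_map (/ sqrt c) y t)).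
    + intros; symmetry; apply link_chart_cone_map.
    + apply is_derive_cone_map_s.
  - apply (is_derive_ext (fun y => cone_map (/ sqrt c) s y)).
    + intros; symmetry; apply link_chart_cone_map.
    + apply is_derive_cone_map_t.
  - apply g3_cone_ds_dt.
  - rewrite g3_cone_ds_ds, g3_cone_dt_dt, Hc.
    transitivity ((/ sqrt c) ^ 2 * (lam ^ 2 * c) * weighted_sq t); [rewrite Hlc|]; ring.
  - rewrite g3_cone_ds_ds. apply Rmult_lt_0_compat; auto.
    apply pow_lt, Rinv_0_lt_compat, sqrt_lt_R0; auto.
Qed.

End Link.

End ConeOverProfile.

(* With [e := parity_offset be1], the lattice [{(y, n) | be1 y even, be2 y = n mod 2}] has
   basis [(2, 0), (e, 2 - e)]. *)
Definition parity_offset (be1 : Z) : Z := if Z.even be1 then 1 else 0.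

Lemma parity_lattice (be1 be2 u v y n : Z) :
  (u * be1 + v * be2 = 1)%Z ->
  (exists m1 m2 : Z, be1 * y = 2 * m1 /\ be2 * y = n + 2 * m2)%Z <->
  (exists m k : Z, y = 2 * m + parity_offset be1 * k /\ n = (2 - parity_offset be1) * k)%Z.
Proof.
  intros Hbez. unfold parity_offset.
  destruct (Z.Even_or_Odd be1) as [[c1 Hc1] | [c1 Hc1]].
  - rewrite (proj2 (Z.even_spec be1) (ex_intro _ c1 Hc1)).
    destruct (Z.Even_or_Odd be2) as [[c2 Hc2] | [c2 Hc2]]; [subst; lia|].
    split.
    + intros (m1 & m2 & H1 & H2). exists (m2 - c2 * y)%Z, n. subst; nia.
    + intros (m & k & Hy & Hn). exists (c1 * y)%Z, (c2 * y + m)%Z. subst; nia.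
  - replace (Z.even be1) with false
      by (rewrite <- Z.negb_odd, (proj2 (Z.odd_spec be1) (ex_intro _ c1 Hc1)); reflexivity).
    split.
    + intros (m1 & m2 & H1 & H2). exists (m1 - c1 * y)%Z, (be2 * (m1 - c1 * y) - m2)%Z.
      subst; nia.
    + intros (m & k & Hy & Hn). exists (be1 * m)%Z, (be2 * m - k)%Z. subst; nia.
Qed.

Lemma angle_lattice (b1 b2 g be1 be2 u v m1 n2 : Z) (sg : R) :
  b1 = (be1 * g)%Z -> b2 = (be2 * g)%Z -> (u * be1 + v * be2 = 1)%Z -> g <> 0%Z ->
  (IZR b1 * sg = IZR (2 * m1) * PI /\ IZR b2 * sg = IZR n2 * PI) <->
  exists y : Z, sg = IZR y * PI / IZR g /\ (be1 * y = 2 * m1)%Z /\ (be2 * y = n2)%Z.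
Proof.
  intros -> -> Hbez Hg. pose proof PI_RGT_0. apply not_0_IZR in Hg.
  split.
  - intros [H1 H2]. exists (u * (2 * m1) + v * n2)%Z.
    assert (Hsg : sg = IZR (u * (2 * m1) + v * n2) * PI / IZR g).
    { apply (Rmult_eq_reg_l (IZR g)); auto.
      transitivity (IZR u * (IZR (be1 * g) * sg) + IZR v * (IZR (be2 * g) * sg)).
      - transitivity (IZR (u * be1 + v * be2) * IZR g * sg); [rewrite Hbez; ring|].
        rewrite plus_IZR, !mult_IZR; ring.
      - rewrite H1, H2, plus_IZR, !mult_IZR. field; auto. }
    split; [exact Hsg|]. rewrite mult_IZR in H1, H2.
    split; apply eq_IZR, (Rmult_eq_reg_r PI); try lra.
    + rewrite <- H1, Hsg, !mult_IZR. field. auto.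
    + rewrite <- H2, Hsg, !mult_IZR. field. auto.
  - intros (y & -> & H1 & H2). rewrite <- H1, <- H2, !mult_IZR. split; field; auto.
Qed.

Lemma gcd_cofactors (b1 b2 : Z) :
  b1 <> 0%Z ->
  exists g be1 be2 u v : Z, (0 < g)%Z /\ b1 = (be1 * g)%Z /\ b2 = (be2 * g)%Z /\
    (u * be1 + v * be2 = 1)%Z.
Proof.
  intros Hb1. set (g := Z.gcd b1 b2).
  assert (Hg : (0 < g)%Z).
  { pose proof (Z.gcd_nonneg b1 b2).
    assert (g <> 0%Z) by (intros Hz; apply Z.gcd_eq_0_l in Hz; lia). unfold g in *; lia. }
  destruct (Z.gcd_divide_l b1 b2) as [be1 Hbe1], (Z.gcd_divide_r b1 b2) as [be2 Hbe2].
  destruct (Z.gcd_bezout b1 b2 g eq_refl) as [u [v Huv]]. fold g in Hbe1, Hbe2.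
  exists g, be1, be2, u, v. repeat split; auto. nia.
Qed.

Lemma half_period_lattice (b1 b2 : Z) (T : R) :
  b1 <> 0%Z -> T <> 0 ->
  exists u1 u2 v1 v2 : R, u1 * v2 - u2 * v1 <> 0 /\
  forall sg tau : R,
    (exists n m1 m2 : Z, tau = IZR n * T /\
       IZR b1 * sg = IZR (2 * m1) * PI /\ IZR b2 * sg = IZR (n + 2 * m2) * PI) <->
    (exists m k : Z, sg = IZR m * u1 + IZR k * v1 /\ tau = IZR m * u2 + IZR k * v2).
Proof.
  intros Hb1 HT. pose proof PI_RGT_0.
  destruct (gcd_cofactors b1 b2 Hb1) as (g & be1 & be2 & u & v & Hg & Hbe1 & Hbe2 & Hbez).
  pose proof (parity_lattice be1 be2 u v) as Hpar. set (e := parity_offset be1) in Hpar.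
  assert (He : (e = 0 \/ e = 1)%Z) by (unfold e, parity_offset; destruct (Z.even be1); auto).
  assert (HG : 0 < IZR g) by (apply IZR_lt; lia).
  exists (2 * PI / IZR g), 0, (IZR e * PI / IZR g), (IZR (2 - e) * T). split.
  { assert (IZR (2 - e) <> 0) by (apply not_0_IZR; lia).
    replace (2 * PI / IZR g * (IZR (2 - e) * T) - 0 * (IZR e * PI / IZR g))
      with (2 * PI * IZR (2 - e) * T / IZR g) by (field; lra).
    apply Rmult_integral_contrapositive_currified; [|apply Rinv_neq_0_compat, Rgt_not_eq; lra].
    apply Rmult_integral_contrapositive_currified; [|exact HT].
    apply Rmult_integral_contrapositive_currified; [apply Rgt_not_eq; lra | assumption]. }
  intros sg tau. split.
  - intros (n & m1 & m2 & Htau & H1 & H2).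
    destruct (proj1 (angle_lattice b1 b2 g be1 be2 u v m1 (n + 2 * m2) sg Hbe1 Hbe2 Hbez
      ltac:(lia)) (conj H1 H2)) as (y & Hsg & Hy1 & Hy2).
    destruct (proj1 (Hpar y n Hbez) (ex_intro _ m1 (ex_intro _ m2 (conj Hy1 Hy2))))
      as (m & k & Hy & Hn).
    exists m, k. rewrite Hsg, Htau, Hy, Hn, plus_IZR, !mult_IZR. split; field; lra.
  - intros (m & k & Hsg & Htau).
    destruct (proj2 (Hpar (2 * m + e * k) ((2 - e) * k) Hbez)%Z
      (ex_intro _ m (ex_intro _ k (conj eq_refl eq_refl)))) as (m1 & m2 & Hy1 & Hy2).
    destruct (proj2 (angle_lattice b1 b2 g be1 be2 u v m1 ((2 - e) * k + 2 * m2) sg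
      Hbe1 Hbe2 Hbez ltac:(lia))) as [H1 H2].
    { exists (2 * m + e * k)%Z. split; [|split; auto].
      rewrite Hsg, plus_IZR, !mult_IZR. field. lra. }
    exists ((2 - e) * k)%Z, m1, m2. split; [|split; auto].
    rewrite Htau, mult_IZR. ring.
Qed.

Lemma sqrt_pos_sq x : 0 < x -> 0 < sqrt x /\ sqrt x ^ 2 = x.
Proof. intros Hx. split; [apply sqrt_lt_R0 | apply pow2_sqrt]; lra. Qed.

Lemma eq_of_sq_eq x y : 0 <= x -> 0 <= y -> x ^ 2 = y ^ 2 -> x = y.
Proof. intros Hx Hy Hsq. apply Rsqr_inj; auto. unfold Rsqr. simpl in Hsq. lra. Qed.

Lemma inv_sqrt3_pos : 0 < / sqrt 3.
Proof. apply Rinv_0_lt_compat, Rlt_sqrt3_0. Qed.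

Lemma inv_sqrt3_pow2 : (/ sqrt 3) ^ 2 = / 3.
Proof. rewrite pow_inv, pow2_sqrt by lra. reflexivity. Qed.

Lemma inv_sqrt3_scale : (/ sqrt 3) ^ 2 * 3 = 1.
Proof. rewrite inv_sqrt3_pow2; field. Qed.

Section JacobiCone.

Variables b1 b2 b3 : Z.
Hypothesis Hb23 : (b2 > b3)%Z.
Hypothesis Hb3 : (b3 > 0)%Z.
Hypothesis Hsum : (b1 + b2 + b3 = 0)%Z.

Local Notation B1 := (IZR b1).
Local Notation B2 := (IZR b2).
Local Notation B3 := (IZR b3).
Local Notation A := (aa b1 b2 b3).
Local Notation K := (bb b1 b2 b3).

Definition amp1 : R := sqrt ((a3 b1 b2 b3 - a1 b1 b2 b3) / a3 b1 b2 b3).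
Definition amp2 : R := sqrt ((a3 b1 b2 b3 - a2 b1 b2 b3) / a3 b1 b2 b3).
Definition amp3 : R := sqrt ((a2 b1 b2 b3 - a3 b1 b2 b3) / a2 b1 b2 b3).

Definition profile1 (t : R) : R := amp1 * jdn (A * t) K.
Definition profile2 (t : R) : R := amp2 * jcn (A * t) K.
Definition profile3 (t : R) : R := amp3 * jsn (A * t) K.

Lemma B1_eq : B1 = - B2 - B3.
Proof. replace b1 with (- b2 - b3)%Z by lia. rewrite minus_IZR, opp_IZR. ring. Qed.

Lemma B3_B2_pos : 0 < B3 < B2.
Proof. split; apply IZR_lt; lia. Qed.

Lemma amp1_radicand : (a3 b1 b2 b3 - a1 b1 b2 b3) / a3 b1 b2 b3 = 3 * B2 / (2 * B2 + B3).
Proof.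
  pose proof B3_B2_pos; pose proof Rlt_sqrt3_0.
  unfold a1, a3. rewrite B1_eq. field. split; lra.
Qed.

Lemma amp2_radicand : (a3 b1 b2 b3 - a2 b1 b2 b3) / a3 b1 b2 b3 = 3 * (B2 + B3) / (2 * B2 + B3).
Proof.
  pose proof B3_B2_pos; pose proof Rlt_sqrt3_0.
  unfold a2, a3. rewrite B1_eq. field. split; lra.
Qed.

Lemma amp3_radicand : (a2 b1 b2 b3 - a3 b1 b2 b3) / a2 b1 b2 b3 = 3 * (B2 + B3) / (B2 + 2 * B3).
Proof.
  pose proof B3_B2_pos; pose proof Rlt_sqrt3_0.
  unfold a2, a3. rewrite B1_eq. field. split; lra.
Qed.

Lemma aa_radicand : a2 b1 b2 b3 * (a1 b1 b2 b3 - a3 b1 b2 b3) = B2 * (B2 + 2 * B3).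
Proof.
  unfold a1, a2, a3. rewrite B1_eq.
  transitivity ((/ sqrt 3) ^ 2 * (3 * B2 * (B2 + 2 * B3))); [ring|].
  rewrite inv_sqrt3_pow2. field.
Qed.

Lemma bb_radicand :
  a1 b1 b2 b3 * (a2 b1 b2 b3 - a3 b1 b2 b3) / (a2 b1 b2 b3 * (a1 b1 b2 b3 - a3 b1 b2 b3))
  = (B2 - B3) * (B2 + B3) / (B2 * (B2 + 2 * B3)).
Proof.
  pose proof B3_B2_pos; pose proof Rlt_sqrt3_0.
  unfold a1, a2, a3. rewrite B1_eq. field. repeat split; nra.
Qed.

Lemma amp1_spec : 0 < amp1 /\ amp1 ^ 2 = 3 * B2 / (2 * B2 + B3).
Proof.
  pose proof B3_B2_pos. unfold amp1. rewrite amp1_radicand.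
  apply sqrt_pos_sq, Rdiv_lt_0_compat; lra.
Qed.

Lemma amp2_spec : 0 < amp2 /\ amp2 ^ 2 = 3 * (B2 + B3) / (2 * B2 + B3).
Proof.
  pose proof B3_B2_pos. unfold amp2. rewrite amp2_radicand.
  apply sqrt_pos_sq, Rdiv_lt_0_compat; lra.
Qed.

Lemma amp3_spec : 0 < amp3 /\ amp3 ^ 2 = 3 * (B2 + B3) / (B2 + 2 * B3).
Proof.
  pose proof B3_B2_pos. unfold amp3. rewrite amp3_radicand.
  apply sqrt_pos_sq, Rdiv_lt_0_compat; lra.
Qed.

Lemma aa_spec : 0 < A /\ A ^ 2 = B2 * (B2 + 2 * B3).
Proof. pose proof B3_B2_pos. unfold aa. rewrite aa_radicand. apply sqrt_pos_sq; nra. Qed.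

Lemma bb_spec : 0 < K < 1 /\ K ^ 2 = (B2 - B3) * (B2 + B3) / (B2 * (B2 + 2 * B3)).
Proof.
  pose proof B3_B2_pos. unfold bb. rewrite bb_radicand.
  assert (Hpos : 0 < (B2 - B3) * (B2 + B3) / (B2 * (B2 + 2 * B3)))
    by (apply Rdiv_lt_0_compat; nra).
  assert (Hlt1 : (B2 - B3) * (B2 + B3) / (B2 * (B2 + 2 * B3)) < 1)
    by (apply (Rmult_lt_reg_r (B2 * (B2 + 2 * B3))); [nra|];
        unfold Rdiv; rewrite Rmult_assoc, Rinv_l by nra; nra).
  destruct (sqrt_pos_sq _ Hpos) as [Hs Hsq]. repeat split; auto.
  rewrite <- sqrt_1. apply sqrt_lt_1_alt; lra.
Qed.

Lemma aa_bb_spec :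
  0 < A /\ 0 < K < 1 /\
  A ^ 2 = a2 b1 b2 b3 * (a1 b1 b2 b3 - a3 b1 b2 b3) /\
  K ^ 2 = a1 b1 b2 b3 * (a2 b1 b2 b3 - a3 b1 b2 b3) / (a2 b1 b2 b3 * (a1 b1 b2 b3 - a3 b1 b2 b3)).
Proof. rewrite bb_radicand, aa_radicand. pose proof aa_spec; pose proof bb_spec. tauto. Qed.

Lemma bb_sq_lt_1 : K ^ 2 < 1.
Proof. destruct bb_spec as [[H0 H1] _]. nra. Qed.

Lemma jacobi_identities t :
  jcn (A * t) K ^ 2 = 1 - jsn (A * t) K ^ 2 /\
  jdn (A * t) K ^ 2 = 1 - K ^ 2 * jsn (A * t) K ^ 2.
Proof.
  split; [pose proof (jsn2_jcn2 K (A * t)); lra | apply jdn2, bb_sq_lt_1].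
Qed.

Lemma profile_sq_jacobi t : profile_sq profile1 profile2 profile3 t = 3.
Proof.
  pose proof B3_B2_pos. destruct (jacobi_identities t) as [Hcn Hdn].
  unfold profile_sq, profile1, profile2, profile3. rewrite !Rpow_mult_distr, Hcn, Hdn.
  rewrite (proj2 amp1_spec), (proj2 amp2_spec), (proj2 amp3_spec), (proj2 bb_spec).
  field. split; lra.
Qed.

Lemma lagrangian_jacobi t : B1 * profile1 t ^ 2 + B2 * profile2 t ^ 2 + B3 * profile3 t ^ 2 = 0.
Proof.
  pose proof B3_B2_pos. destruct (jacobi_identities t) as [Hcn Hdn].
  unfold profile1, profile2, profile3. rewrite !Rpow_mult_distr, Hcn, Hdn, B1_eq.
  rewrite (proj2 amp1_spec), (proj2 amp2_spec), (proj2 amp3_spec), (proj2 bb_spec).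
  field. repeat split; nra.
Qed.

Lemma amp_relation1 : A * K ^ 2 * amp1 = / sqrt 3 * (B2 - B3) * amp2 * amp3.
Proof.
  pose proof B3_B2_pos. pose proof Rlt_sqrt3_0.
  destruct amp1_spec as [P1 S1], amp2_spec as [P2 S2], amp3_spec as [P3 S3],
    aa_spec as [PA SA], bb_spec as [PK SK].
  apply eq_of_sq_eq.
  - pose proof (pow2_ge_0 K). repeat apply Rmult_le_pos; lra.
  - pose proof inv_sqrt3_pos. repeat apply Rmult_le_pos; lra.
  - rewrite !Rpow_mult_distr, inv_sqrt3_pow2, S1, S2, S3, SA, SK. field. repeat split; nra.
Qed.

Lemma amp_relation2 : A * amp2 = / sqrt 3 * (B3 - B1) * amp3 * amp1.
Proof.
  pose proof B3_B2_pos. pose proof Rlt_sqrt3_0.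
  destruct amp1_spec as [P1 S1], amp2_spec as [P2 S2], amp3_spec as [P3 S3], aa_spec as [PA SA].
  rewrite B1_eq. apply eq_of_sq_eq.
  - nra.
  - pose proof inv_sqrt3_pos. repeat apply Rmult_le_pos; lra.
  - rewrite !Rpow_mult_distr, inv_sqrt3_pow2, S1, S2, S3, SA. field. split; lra.
Qed.

Lemma amp_relation3 : A * amp3 = / sqrt 3 * (B2 - B1) * amp1 * amp2.
Proof.
  pose proof B3_B2_pos. pose proof Rlt_sqrt3_0.
  destruct amp1_spec as [P1 S1], amp2_spec as [P2 S2], amp3_spec as [P3 S3], aa_spec as [PA SA].
  rewrite B1_eq. apply eq_of_sq_eq.
  - nra.
  - pose proof inv_sqrt3_pos. repeat apply Rmult_le_pos; lra.
  - rewrite !Rpow_mult_distr, inv_sqrt3_pow2, S1, S2, S3, SA. field. split; lra.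
Qed.

Lemma is_derive_scaled (f : R -> R) (c : R) t df :
  is_derive f (A * t) df -> is_derive (fun y => c * f (A * y)) t (c * (df * A)).
Proof.
  intros Hf. apply is_derive_scal, (is_derive_comp_R f (fun y => A * y)); auto.
  auto_derive; auto; ring.
Qed.

Lemma is_derive_profile1 t : is_derive profile1 t (/ sqrt 3 * (B3 - B2) * profile2 t * profile3 t).
Proof.
  replace (/ sqrt 3 * (B3 - B2) * profile2 t * profile3 t)
    with (amp1 * (- (K ^ 2 * jsn (A * t) K * jcn (A * t) K) * A)).
  - apply (is_derive_scaled (fun v => jdn v K)), is_derive_jdn, bb_sq_lt_1.
  - unfold profile2, profile3.
    transitivity (- (A * K ^ 2 * amp1) * jsn (A * t) K * jcn (A * t) K); [ring|].
    rewrite amp_relation1; ring.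
Qed.

Lemma is_derive_profile2 t : is_derive profile2 t (/ sqrt 3 * (B1 - B3) * profile3 t * profile1 t).
Proof.
  replace (/ sqrt 3 * (B1 - B3) * profile3 t * profile1 t)
    with (amp2 * (- (jsn (A * t) K * jdn (A * t) K) * A)).
  - apply (is_derive_scaled (fun v => jcn v K)), is_derive_jcn, bb_sq_lt_1.
  - unfold profile3, profile1.
    transitivity (- (A * amp2) * jsn (A * t) K * jdn (A * t) K); [ring|].
    rewrite amp_relation2; ring.
Qed.

Lemma is_derive_profile3 t : is_derive profile3 t (/ sqrt 3 * (B2 - B1) * profile1 t * profile2 t).
Proof.
  replace (/ sqrt 3 * (B2 - B1) * profile1 t * profile2 t)
    with (amp3 * (jcn (A * t) K * jdn (A * t) K * A)).
  - apply (is_derive_scaled (fun v => jsn v K)), is_derive_jsn, bb_sq_lt_1.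
  - unfold profile1, profile2.
    transitivity ((A * amp3) * jcn (A * t) K * jdn (A * t) K); [ring|].
    rewrite amp_relation3; ring.
Qed.

Lemma profile1_pos t : 0 < profile1 t.
Proof. apply Rmult_lt_0_compat; [apply amp1_spec | apply jdn_pos, bb_sq_lt_1]. Qed.

Lemma weighted_sq_jacobi_pos t : 0 < weighted_sq B1 B2 B3 profile1 profile2 profile3 t.
Proof.
  pose proof B3_B2_pos. pose proof (profile1_pos t).
  assert (0 < (B1 * profile1 t) ^ 2).
  { rewrite <- Rsqr_pow2. apply Rsqr_pos_lt, Rmult_integral_contrapositive_currified;
      rewrite ?B1_eq; lra. }
  unfold weighted_sq.
  pose proof (pow2_ge_0 (B2 * profile2 t)). pose proof (pow2_ge_0 (B3 * profile3 t)). lra.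
Qed.

Lemma PhiN_cone_map : PhiN b1 b2 b3 = cone_map B1 B2 B3 profile1 profile2 profile3.
Proof.
  extensionality r; extensionality s; extensionality t.
  unfold PhiN, cone_map, profile1, profile2, profile3, amp1, amp2, amp3.
  rewrite !RtoC_mul_expi.
  f_equal; [f_equal|]; f_equal; ring.
Qed.

Local Notation cone := (cone_map B1 B2 B3 profile1 profile2 profile3).

Lemma cone_eq_radius r s t r' s' t' :
  0 < r -> 0 < r' -> cone r s t = cone r' s' t' -> r' = r.
Proof.
  intros Hr Hr' Heq. apply (f_equal (fun p => g3 p p)) in Heq.
  rewrite !g3_cone_map, !profile_sq_jacobi in Heq. nra.
Qed.

Lemma B3_angle s s' : B3 * (s' - s) = - (B1 * (s' - s) + B2 * (s' - s)).
Proof. replace B3 with (- B1 - B2) by (rewrite B1_eq; ring). ring. Qed.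

Lemma cone_eq_same_radius_iff r s t s' t' :
  0 < r ->
  (cone r s t = cone r s' t' <->
   (profile1 t' = profile1 t /\ cos (B1 * (s' - s)) = 1) /\
   (cos (jam (A * t') K) * cos (B2 * (s' - s)) = cos (jam (A * t) K) /\
    cos (jam (A * t') K) * sin (B2 * (s' - s)) = 0) /\
   (sin (jam (A * t') K) * cos (B3 * (s' - s)) = sin (jam (A * t) K) /\
    sin (jam (A * t') K) * sin (B3 * (s' - s)) = 0)).
Proof.
  intros Hr. destruct amp2_spec as [P2 _], amp3_spec as [P3 _].
  unfold cone_map. rewrite C3_eq_iff.
  rewrite polar_pos_eq_iff by (apply Rmult_lt_0_compat; auto using profile1_pos).
  unfold profile2, profile3, jcn, jsn. rewrite <- !Rmult_assoc.
  rewrite !polar_scaled_eq_iff by (apply Rgt_not_eq, Rmult_lt_0_compat; auto).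
  rewrite <- !Rmult_minus_distr_l.
  split; intros ([Hp Hc] & H2 & H3); (split; [split | tauto]); auto.
  - apply (Rmult_eq_reg_l r); [exact Hp | lra].
  - rewrite Hp; reflexivity.
Qed.

Lemma cone_eq_periods r s t s' t' :
  0 < r -> cone r s t = cone r s' t' ->
  exists n m1 m2 : Z, A * (t' - t) = IZR n * ellF K PI /\
    B1 * (s' - s) = IZR (2 * m1) * PI /\ B2 * (s' - s) = IZR (n + 2 * m2) * PI.
Proof.
  intros Hr Heq.
  apply cone_eq_same_radius_iff in Heq as ((_ & Hc1) & (Hc2 & Hs2) & (Hc3 & Hs3)); auto.
  pose proof (cos_eq_1_sin _ Hc1) as Hs1.
  rewrite B3_angle in Hc3, Hs3.
  rewrite cos_neg, cos_plus, Hc1, Hs1 in Hc3. rewrite sin_neg, sin_plus, Hc1, Hs1 in Hs3.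
  destruct (proj1 (half_turn_iff (jam (A * t) K) (jam (A * t') K) (B2 * (s' - s))))
    as (n & m2 & Hphi & Hth2); [repeat split; lra|].
  destruct (proj1 (cos_eq_1_iff _) Hc1) as [m1 Hm1].
  apply jam_add_iff in Hphi; [|apply bb_sq_lt_1].
  exists n, m1, m2. repeat split; auto. lra.
Qed.

Lemma cone_eq_of_periods r s t s' t' (n m1 m2 : Z) :
  0 < r -> A * (t' - t) = IZR n * ellF K PI ->
  B1 * (s' - s) = IZR (2 * m1) * PI -> B2 * (s' - s) = IZR (n + 2 * m2) * PI ->
  cone r s t = cone r s' t'.
Proof.
  intros Hr Ht H1 H2. apply cone_eq_same_radius_iff; auto.
  assert (Hphi : jam (A * t') K = jam (A * t) K + IZR n * PI)
    by (apply jam_add_iff; [apply bb_sq_lt_1 | lra]).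
  destruct (half_turn_system (jam (A * t) K) n m2) as (Hc2 & Hs2 & Hc3 & Hs3).
  rewrite <- Hphi, <- H2 in *.
  assert (Hc1 : cos (B1 * (s' - s)) = 1) by (apply cos_eq_1_iff; eauto).
  pose proof (cos_eq_1_sin _ Hc1) as Hs1.
  rewrite B3_angle, cos_neg, sin_neg, cos_plus, sin_plus, Hc1, Hs1.
  assert (Hsn : jsn (A * t') K ^ 2 = jsn (A * t) K ^ 2).
  { unfold jsn. rewrite Hphi, sin_plus, sin_IZR_PI.
    transitivity (sin (jam (A * t) K) ^ 2 * cos (IZR n * PI) ^ 2); [ring|].
    rewrite cos_IZR_PI_sq; ring. }
  unfold profile1, jdn. rewrite Hsn. repeat split; auto; lra.
Qed.

Lemma cone_eq_iff r s t r' s' t' :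
  0 < r -> 0 < r' ->
  (cone r s t = cone r' s' t' <->
   r = r' /\ exists n m1 m2 : Z, A * (t' - t) = IZR n * ellF K PI /\
     B1 * (s' - s) = IZR (2 * m1) * PI /\ B2 * (s' - s) = IZR (n + 2 * m2) * PI).
Proof.
  intros Hr Hr'. split.
  - intros Heq. pose proof (cone_eq_radius _ _ _ _ _ _ Hr Hr' Heq); subst r'.
    split; [reflexivity | apply (cone_eq_periods r); auto].
  - intros (<- & n & m1 & m2 & Ht & H1 & H2). apply (cone_eq_of_periods r s t s' t' n m1 m2); auto.
Qed.

Lemma B_sum : B1 + B2 + B3 = 0.
Proof. rewrite B1_eq; ring. Qed.

Local Ltac jacobi_profile :=
  auto using B_sum, lagrangian_jacobi, is_derive_profile1, is_derive_profile2, is_derive_profile3,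
    inv_sqrt3_pos, profile_sq_jacobi, weighted_sq_jacobi_pos, inv_sqrt3_scale.

Lemma Nset_cone_image : Nset b1 b2 b3 = cone_image B1 B2 B3 profile1 profile2 profile3.
Proof. unfold Nset, cone_image. rewrite PhiN_cone_map. reflexivity. Qed.

Lemma calibrated_PhiN : calibrated_SL (PI / 2) (PhiN b1 b2 b3).
Proof. rewrite PhiN_cone_map. apply calibrated_cone_map with (lam := / sqrt 3); jacobi_profile. Qed.

Lemma C1_immersion_PhiN : C1_immersion (PhiN b1 b2 b3).
Proof.
  rewrite PhiN_cone_map. apply C1_immersion_cone_map with (lam := / sqrt 3); jacobi_profile.
  intros t; rewrite profile_sq_jacobi; lra.
Qed.

Lemma link_PhiN s t :
  S5 (link_chart (PhiN b1 b2 b3) s t) /\ Nset b1 b2 b3 (link_chart (PhiN b1 b2 b3) s t).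
Proof.
  rewrite Nset_cone_image, PhiN_cone_map. apply link_chart_spec with (c := 3); jacobi_profile.
  lra.
Qed.

Lemma Nset_S5_link p :
  Nset b1 b2 b3 p -> S5 p -> exists s t, p = link_chart (PhiN b1 b2 b3) s t.
Proof.
  rewrite Nset_cone_image, PhiN_cone_map. apply cone_image_S5 with (c := 3); jacobi_profile.
  lra.
Qed.

Lemma conformal_PhiN : conformal_coords (link_chart (PhiN b1 b2 b3)).
Proof.
  rewrite PhiN_cone_map. apply conformal_link_chart with (lam := / sqrt 3) (c := 3); jacobi_profile.
  lra.
Qed.

Lemma cone_on_T2_PhiN : cone_on_T2_param (PhiN b1 b2 b3).
Proof.
  destruct aa_spec as [PA _]. pose proof (ellF_PI_pos K bb_sq_lt_1).
  destruct (half_period_lattice b1 b2 (ellF K PI / A)) as (u1 & u2 & v1 & v2 & Hdet & Hlat).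
  { lia. }
  { apply Rgt_not_eq, Rdiv_lt_0_compat; lra. }
  exists u1, u2, v1, v2. split; [exact Hdet|].
  intros r s t r' s' t' Hr Hr'. rewrite PhiN_cone_map, cone_eq_iff by assumption.
  rewrite <- Hlat. split; intros (<- & n & m1 & m2 & Ht & H1 & H2); split; auto;
    exists n, m1, m2; split; auto.
  - apply (Rmult_eq_reg_l A); [rewrite Ht; field|]; lra.
  - rewrite Ht; field; lra.
Qed.

End JacobiCone.

Theorem theorem8p7 (b1 b2 b3 : Z) :
  (b2 > b3)%Z -> (b3 > 0)%Z -> (0 > b1)%Z -> (b1 + b2 + b3 = 0)%Z ->
  (* a > 0, b in (0,1), with the defining squares *)
  (0 < aa b1 b2 b3 /\ 0 < bb b1 b2 b3 < 1 /\
   aa b1 b2 b3 ^ 2 = a2 b1 b2 b3 * (a1 b1 b2 b3 - a3 b1 b2 b3) /\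
   bb b1 b2 b3 ^ 2 = a1 b1 b2 b3 * (a2 b1 b2 b3 - a3 b1 b2 b3)
                     / (a2 b1 b2 b3 * (a1 b1 b2 b3 - a3 b1 b2 b3))) /\
  (* N is a special Lagrangian cone on T^2 with phase i *)
  is_cone (Nset b1 b2 b3) /\
  cone_on_T2_param (PhiN b1 b2 b3) /\
  C1_immersion (PhiN b1 b2 b3) /\
  calibrated_SL (PI / 2) (PhiN b1 b2 b3) /\
  (* (s,t) are conformal coordinates on N cap S^5 *)
  (forall s t, S5 (link_chart (PhiN b1 b2 b3) s t) /\
               Nset b1 b2 b3 (link_chart (PhiN b1 b2 b3) s t)) /\
  (forall p, Nset b1 b2 b3 p -> S5 p ->
     exists s t, p = link_chart (PhiN b1 b2 b3) s t) /\
  conformal_coords (link_chart (PhiN b1 b2 b3)).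
Proof.
  (* [b1 < 0] is implied by the other hypotheses. *)
  intros Hb23 Hb3 _ Hsum.
  split; [apply aa_bb_spec; assumption|].
  split; [rewrite Nset_cone_image; apply is_cone_cone_image|].
  split; [apply cone_on_T2_PhiN; assumption|].
  split; [apply C1_immersion_PhiN; assumption|].
  split; [apply calibrated_PhiN; assumption|].
  split; [intros s t; apply link_PhiN; assumption|].
  split; [intros p; apply Nset_S5_link; assumption|].
  apply conformal_PhiN; assumption.
Qed.
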